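(* Let $\Sigma$ be a finite alphabet and let $S$ be a set of unranked trees over $\Sigma$ definable by a sibling-order-invariant MSO sentence over the class of all unranked trees over $\Sigma$. Then there is a deterministic $\triangleleft$-invariant tree automaton $\mathcal N$ over $\Sigma$ such that $S$ is exactly the set of unranked trees $T$ for which some sibling-ordered extension $(T,\triangleleft)$ of $T$ is accepted by $\mathcal N$ (equivalently, for which every sibling-ordered extension $(T,\triangleleft)$ of $T$ is accepted by $\mathcal N$).
   Context: An unranked tree domain $D$ is a finite prefix-closed set of words over the positive integers such that $s\cdot i\in D$ implies $s\cdot j\in D$ for all $1\le j<i$; its root is the empty word $\varepsilon$. An unranked tree over $\Sigma$ is a structure $T=(D,\prec,(P_a)_{a\in\Sigma})$ where $\prec$ is the descendant relation and the sets $P_a$ partition $D$ (node labels). A sibling order on $T$ is a binary relation $\triangleleft$ relating only distinct children $s\cdot i,s\cdot j$ of a common node $s$ and which is a linear order on the set of children of each node; $(T,\triangleleft)$ is a sibling-ordered extension of $T$. An MSO sentence $\varphi$ over the tree vocabulary plus a binary symbol $\triangleleft$ is sibling-order-invariant if for every unranked tree $T$ and any two sibling orders $\triangleleft_1,\triangleleft_2$ on $T$, $(T,\triangleleft_1)\models\varphi$ iff $(T,\triangleleft_2)\models\varphi$; it defines the set of trees $T$ with $(T,\triangleleft)\models\varphi$ for some (equivalently every) sibling order. A tree automaton is $\mathcal N=(\Sigma,Q,F,\delta)$ with finite state set $Q$, final states $F\subseteq Q$, and $\delta:Q\times\Sigma\to 2^{Q^*}$ with each $\delta(q,a)$ a regular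 language over $Q$. A run of $\mathcal N$ on $(T,\triangleleft)$ is a map $\rho:D\to Q$ such that for each node $s$ labeled $a$ with children $s_1\triangleleft\cdots\triangleleft s_n$, the word $\rho(s_1)\cdots\rho(s_n)\in\delta(\rho(s),a)$ (for a leaf, the empty word must be in $\delta(\rho(s),a)$); $(T,\triangleleft)$ is accepted if some run has $\rho(\varepsilon)\in F$. $\mathcal N$ is deterministic if for all $a$ and $q\ne q'$, $\delta(q,a)\cap\delta(q',a)=\emptyset$. $\mathcal N$ is $\triangleleft$-invariant if for all $q,a$, every permutation of a word in $\delta(q,a)$ is in $\delta(q,a)$. *)

From mathcomp Require Import all_boot.
Set Implicit Arguments. Unset Strict Implicit. Unset Printing Implicit Defensive.

(* Nodes are words over the positive integers, represented as [seq nat]. *)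

Definition is_tree_domain (D : seq (seq nat)) : Prop :=
  [/\ [::] \in D,
      (forall (s : seq nat) (i : nat), rcons s i \in D -> s \in D /\ 0 < i)
    & (forall (s : seq nat) (i j : nat), rcons s i \in D -> 0 < j < i ->
          rcons s j \in D)].

(* An unranked tree over Sigma: a finite tree domain together with a labelling
   (the sets P_a = { s | lab s = a } partition the domain). *)
Record utree (Sigma : Type) := UTree {
  dom : seq (seq nat);
  lab : seq nat -> Sigma;
  dom_ok : is_tree_domain dom }.

Definition child_of (s w : seq nat) : bool :=
  (size w == (size s).+1) && prefix s w.

Definition desc (u v : seq nat) : bool := prefix u v && (u != v).

Definition sibling_order (Sigma : Type) (T : utree Sigma) (so : rel (seq nat))
  : Prop :=
  [/\ (forall u v, so u v ->
          [/\ u \in dom T, v \in dom T, u != v &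
              exists s, child_of s u && child_of s v]),
      (forall u v w, so u v -> so v w -> so u w)
    & (forall s u v, u \in dom T -> v \in dom T ->
          child_of s u -> child_of s v -> u != v -> so u v || so v u)].

Inductive mso (Sigma : Type) :=
| MLab of Sigma & nat
| MDesc of nat & nat
| MSib of nat & nat
| MEq of nat & nat
| MIn of nat & nat
| MNot of mso Sigma
| MOr of mso Sigma & mso Sigma
| MEx1 of nat & mso Sigma
| MEx2 of nat & mso Sigma.

Fixpoint fv1 (Sigma : Type) (f : mso Sigma) : seq nat :=
  match f with
  | MLab _ x => [:: x]
  | MDesc x y | MSib x y | MEq x y => [:: x; y]
  | MIn x _ => [:: x]
  | MNot g => fv1 g
  | MOr g h => fv1 g ++ fv1 h
  | MEx1 x g => filter (predC1 x) (fv1 g)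
  | MEx2 _ g => fv1 g
  end.

Fixpoint fv2 (Sigma : Type) (f : mso Sigma) : seq nat :=
  match f with
  | MIn _ X => [:: X]
  | MLab _ _ | MDesc _ _ | MSib _ _ | MEq _ _ => [::]
  | MNot g => fv2 g
  | MOr g h => fv2 g ++ fv2 h
  | MEx1 _ g => fv2 g
  | MEx2 X g => filter (predC1 X) (fv2 g)
  end.

Definition sentence (Sigma : Type) (f : mso Sigma) : bool :=
  nilp (fv1 f) && nilp (fv2 f).

Definition upd (A : Type) (e : nat -> A) (x : nat) (a : A) : nat -> A :=
  fun y => if y == x then a else e y.

Fixpoint sat (Sigma : eqType) (T : utree Sigma) (so : rel (seq nat))
    (e1 : nat -> seq nat) (e2 : nat -> pred (seq nat)) (f : mso Sigma)
    : Prop :=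
  match f with
  | MLab a x => lab T (e1 x) = a
  | MDesc x y => desc (e1 x) (e1 y)
  | MSib x y => so (e1 x) (e1 y)
  | MEq x y => e1 x = e1 y
  | MIn x X => e2 X (e1 x)
  | MNot g => ~ sat T so e1 e2 g
  | MOr g h => sat T so e1 e2 g \/ sat T so e1 e2 h
  | MEx1 x g => exists u, u \in dom T /\ sat T so (upd e1 x u) e2 g
  | MEx2 X g => exists P : pred (seq nat),
      (forall u, P u -> u \in dom T) /\ sat T so e1 (upd e2 X P) g
  end.

(* satisfaction of a sentence (the environments are irrelevant for sentences) *)
Definition models (Sigma : eqType) (T : utree Sigma) (so : rel (seq nat))
    (f : mso Sigma) : Prop :=
  sat T so (fun _ => [::]) (fun _ _ => false) f.

Definition so_invariant (Sigma : eqType) (f : mso Sigma) : Prop :=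
  forall (T : utree Sigma) (so1 so2 : rel (seq nat)),
    sibling_order T so1 -> sibling_order T so2 ->
    (models T so1 f <-> models T so2 f).

Definition regular (A : Type) (L : pred (seq A)) : Prop :=
  exists (St : finType) (s0 : St) (acc : pred St) (tr : St -> A -> St),
    forall w, L w = acc (foldl tr s0 w).

Record tree_automaton (Sigma : Type) := TreeAutomaton {
  ta_Q : finType;
  ta_F : pred ta_Q;
  ta_delta : ta_Q -> Sigma -> pred (seq ta_Q);
  ta_regular : forall q a, regular (ta_delta q a) }.

Definition ta_deterministic (Sigma : Type) (N : tree_automaton Sigma) : Prop :=
  forall (a : Sigma) (q q' : ta_Q N) (w : seq (ta_Q N)),
    q != q' -> ~~ (ta_delta q a w && ta_delta q' a w).

Definition ta_invariant (Sigma : Type) (N : tree_automaton Sigma) : Prop :=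
  forall (q : ta_Q N) (a : Sigma) (w w' : seq (ta_Q N)),
    perm_eq w w' -> ta_delta q a w -> ta_delta q a w'.

Definition is_run (Sigma : Type) (N : tree_automaton Sigma) (T : utree Sigma)
    (so : rel (seq nat)) (rho : seq nat -> ta_Q N) : Prop :=
  forall (s : seq nat) (cs : seq (seq nat)),
    s \in dom T -> uniq cs ->
    (forall w, (w \in cs) = (w \in dom T) && child_of s w) ->
    sorted so cs ->
    ta_delta (rho s) (lab T s) (map rho cs).

Arguments is_run {Sigma} N T so rho.

Definition accepts (Sigma : Type) (N : tree_automaton Sigma) (T : utree Sigma)
    (so : rel (seq nat)) : Prop :=
  exists rho : seq nat -> ta_Q N, is_run N T so rho /\ ta_F (rho [::]).

(* Every MSO formula with free variables among 0..n is compiled into a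
   deterministic bottom-up automaton over labels extended by one bit per
   variable, in which each node reads the states of its children, in sibling
   order, with a finite horizontal automaton.  Atomic formulas need a few
   bits of memory each, negation and disjunction are complement and product,
   and existential quantification is a subset construction on the states.
   For the sentence phi this gives an automaton A that depends on the sibling
   order only through the order in which children are read.  Now let every
   node read the states of its children sorted along a fixed enumeration of
   the states: the resulting automaton is deterministic, its transition
   languages are closed under permutation, and its unique run is the run of A
   along the sibling order that sorts children by their states.  Since phi is
   order-invariant, that particular order decides membership in S. *)

From mathcomp Require Import all_boot zify.
From Stdlib Require Import ClassicalEpsilon.
Set Implicit Arguments. Unset Strict Implicit. Unset Printing Implicit Defensive.

Section TreeFold.
Variable D : seq (seq nat).

Definition children (ord : rel (seq nat)) s :=
  sort (fun u v => (u == v) || ord u v) [seq w <- undup D | child_of s w].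

Lemma mem_children ord s w : (w \in children ord s) = (w \in D) && child_of s w.
Proof. by rewrite mem_sort mem_filter mem_undup andbC. Qed.

Lemma uniq_children ord s : uniq (children ord s).
Proof. by rewrite sort_uniq filter_uniq // undup_uniq. Qed.

Lemma perm_children o1 o2 s : perm_eq (children o1 s) (children o2 s).
Proof. by rewrite /children perm_sort perm_sym perm_sort. Qed.

Definition depth_bound := foldr (fun w m => maxn (size w) m) 0 D.

Lemma size_le_depth_bound w : w \in D -> size w <= depth_bound.
Proof.
rewrite /depth_bound; elim: D => //= x l IH; rewrite inE => /orP[/eqP->|/IH]; lia.
Qed.

Lemma depth_ind (P : seq nat -> Prop) :
  (forall s, s \in D -> (forall c, c \in D -> size s < size c -> P c) -> P s) ->
  forall s, s \in D -> P s.
Proof.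
move=> IH.
suff H n s : s \in D -> depth_bound - size s < n -> P s.
  by move=> s sD; apply: (H (depth_bound - size s).+1).
elim: n s => [//|n IHn] s sD lt; apply: IH => // c cD lt'.
apply: IHn => //; have := size_le_depth_bound cD; have := size_le_depth_bound sD; lia.
Qed.

Variables (L Q : Type) (g : L -> seq Q -> Q) (ord : rel (seq nat)).

Section Fold.
Variable nu : seq nat -> L.

Fixpoint tree_fold_fuel k s : Q :=
  if k is k'.+1 then g (nu s) (map (tree_fold_fuel k') (children ord s))
  else g (nu s) [::].

Definition tree_fold s := tree_fold_fuel depth_bound.+1 s.

Lemma tree_fold_fuel_stable k k' s :
  depth_bound - size s < k -> depth_bound - size s < k' ->
  tree_fold_fuel k s = tree_fold_fuel k' s.
Proof.
elim: k k' s => [//|k IH] [//|k'] s lt lt' /=; congr g.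
apply/eq_in_map => c; rewrite mem_children => /andP[cD /andP[/eqP sz _]].
have := size_le_depth_bound cD => hb; apply: IH; move: lt lt' hb; rewrite sz; lia.
Qed.

Lemma tree_foldE s : tree_fold s = g (nu s) (map tree_fold (children ord s)).
Proof.
rewrite /tree_fold /=; congr g; apply/eq_in_map => c.
rewrite mem_children => /andP[cD /andP[/eqP sz _]].
have := size_le_depth_bound cD; rewrite sz => hb.
by apply: (@tree_fold_fuel_stable depth_bound depth_bound.+1 c); lia.
Qed.

Lemma tree_fold_unique (tau : seq nat -> Q) :
  (forall s, s \in D -> tau s = g (nu s) (map tau (children ord s))) ->
  forall s, s \in D -> tau s = tree_fold s.
Proof.
move=> H; apply: depth_ind => s sD IH; rewrite H // tree_foldE; congr g.
apply/eq_in_map => c; rewrite mem_children => /andP[cD /andP[/eqP sz _]].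
by apply: IH => //; rewrite sz.
Qed.
End Fold.

Lemma tree_fold_local nu nu' s : s \in D ->
  (forall w, w \in D -> prefix s w -> nu w = nu' w) ->
  tree_fold nu s = tree_fold nu' s.
Proof.
move: s; apply: depth_ind => s sD IH H.
rewrite !tree_foldE H ?prefix_refl //; congr g.
apply/eq_in_map => c; rewrite mem_children => /andP[cD /andP[/eqP sz pc]].
apply: IH => //; first by rewrite sz.
by move=> w wD pw; apply: H => //; apply: prefix_trans pc pw.
Qed.

Lemma eq_tree_fold nu nu' s : s \in D ->
  {in D, nu =1 nu'} -> tree_fold nu s = tree_fold nu' s.
Proof. by move=> sD H; apply: tree_fold_local => // w wD _; apply: H. Qed.

End TreeFold.

Lemma prefix_rconsE (s u : seq nat) x :
  prefix s (rcons u x) = (s == rcons u x) || prefix s u.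
Proof.
apply/idP/idP.
  rewrite !prefixE => /eqP E.
  case: (leqP (size s) (size u)) => le.
    by rewrite -[X in _ || (_ == X)]E -cats1 takel_cat // eqxx orbT.
  have szs : size s = size (rcons u x).
    have := size_take (size s) (rcons u x); rewrite E size_rcons.
    by case: ifP; lia.
  by move: E; rewrite szs take_size => ->; rewrite eqxx.
case/orP=> [/eqP->|]; first exact: prefix_refl.
by move=> p; apply: prefix_trans p (prefix_rcons _ _).
Qed.

Lemma prefix_eq_size (a b w : seq nat) :
  prefix a w -> prefix b w -> size a = size b -> a = b.
Proof. by rewrite !prefixE => /eqP Ea /eqP Eb sz; rewrite -Ea -Eb sz. Qed.

Lemma child_of_strict_prefix s c w :
  child_of s c -> prefix c w -> prefix s w && (s != w).
Proof.
case/andP=> /eqP sz psc pcw; rewrite (prefix_trans psc pcw) /=.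
by apply/eqP=> E; move: (size_prefix pcw); rewrite -E sz ltnn.
Qed.

Lemma child_of_rcons s u : child_of s u -> u = rcons s (last 0 u).
Proof.
case/andP=> /eqP sz /prefixP [t E]; move: sz; rewrite E size_cat.
case: t E => [|a [|b t]] E /=; try lia.
by move=> _; rewrite cats1 last_rcons.
Qed.

Lemma child_of_not_prefix s c : child_of s c -> ~~ prefix c s.
Proof. by case/andP=> /eqP sz _; apply/negP=> /size_prefix; rewrite sz ltnn. Qed.

Section Domain.
Variables (Sigma : Type) (T : utree Sigma).
Notation D := (dom T).

Lemma root_in_dom : [::] \in D.
Proof. by case: (dom_ok T). Qed.

Lemma dom_prefix_closed u s : u \in D -> prefix s u -> s \in D.
Proof.
case: (dom_ok T) => r0 hp _.
elim/last_ind: u s => [|u x IH] s.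
  by move=> _; rewrite prefixs0 => /eqP->.
move=> uD; rewrite prefix_rconsE => /orP[/eqP->//|]; apply: IH.
by case: (hp _ _ uD).
Qed.

Lemma zero_notin_dom : [:: 0] \notin D.
Proof. by case: (dom_ok T) => _ hp _; apply/negP => /(hp [::] 0) [] //. Qed.

Lemma strict_prefix_child o s w : w \in D -> prefix s w -> s != w ->
  exists2 c, c \in children D o s & prefix c w.
Proof.
move=> wD psw sw; exists (take (size s).+1 w); last exact: prefix_take.
have szw : size s < size w.
  have := size_prefix psw; rewrite leq_eqVlt => /orP[/eqP E|//].
  by move: psw; rewrite prefixE E take_size eq_sym (negbTE sw).
rewrite mem_children (dom_prefix_closed wD (prefix_take _ _)) /child_of size_take.
have -> : (if (size s).+1 < size w then (size s).+1 else size w) = (size s).+1.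
  by case: ifP; lia.
by rewrite eqxx /= prefixE take_takel // -prefixE.
Qed.

Lemma children_prefix_eq o s c d w :
  c \in children D o s -> d \in children D o s -> prefix c w -> prefix d w -> c = d.
Proof.
rewrite !mem_children => /andP[_ /andP[/eqP sc _]] /andP[_ /andP[/eqP sd _]] pc pd.
by apply: (prefix_eq_size pc pd); rewrite sc sd.
Qed.

Lemma has_strict_descendant (p : pred (seq nat)) o s :
  has (fun w => prefix s w && (s != w) && p w) D =
  has (fun c => has (fun w => prefix c w && p w) D) (children D o s).
Proof.
apply/hasP/hasP.
  case=> w wD /andP[/andP[psw sw] pw].
  have [c cch pcw] := strict_prefix_child o wD psw sw.
  by exists c => //; apply/hasP; exists w => //; rewrite pcw.
case=> c; rewrite mem_children => /andP[cD cc] /hasP[w wD /andP[pcw pw]].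
by exists w => //; rewrite (child_of_strict_prefix cc pcw).
Qed.

Lemma has_descendant (p : pred (seq nat)) o s : s \in D ->
  has (fun w => prefix s w && p w) D =
  p s || has (fun c => has (fun w => prefix c w && p w) D) (children D o s).
Proof.
move=> sD; rewrite -has_strict_descendant; apply/hasP/orP.
  case=> w wD /andP[psw pw]; case: (eqVneq s w) => [->|sw]; first by left.
  by right; apply/hasP; exists w => //; rewrite psw sw.
case=> [ps|/hasP[w wD /andP[/andP[psw _] pw]]]; last by exists w => //; rewrite psw.
by exists s => //; rewrite prefix_refl.
Qed.

End Domain.

Section SiblingOrder.
Variables (Sigma : Type) (T : utree Sigma) (so : rel (seq nat)).
Hypothesis hso : sibling_order T so.
Notation D := (dom T).

Lemma sibling_order_irr : irreflexive so.
Proof. by move=> u; apply/negP; case: hso => h _ _ /h [_ _ /eqP]. Qed.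

Lemma sibling_order_trans : transitive so.
Proof. by case: hso => _ h _ v u w; apply: h. Qed.

Lemma sibling_order_parent u v : so u v ->
  exists s, [/\ u \in D, v \in D, child_of s u & child_of s v].
Proof. by case: hso => h _ _ /h [uD vD _ [s /andP[??]]]; exists s. Qed.

Lemma sorted_children s : sorted so (children D so s).
Proof.
set l := children D so s.
have srt : sorted (fun u v => (u == v) || so u v) l.
  apply: (sort_sorted_in (P := fun w => (w \in D) && child_of s w)).
    move=> u v /andP[uD cu] /andP[vD cv].
    case: (eqVneq u v) => [->|uv]; first by [].
    case: hso => _ _ tot.
    by case/orP: (tot _ _ _ uD vD cu cv uv) => ->; rewrite ?orbT.
  by apply/allP => w; rewrite mem_filter mem_undup andbC.
have ul : uniq l := uniq_children D so s.
move: srt ul; case: l => // x l /=; elim: l x => //= y l IH x /andP[/orP[/eqP->|sxy] p].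
  by rewrite inE eqxx.
move=> /andP[]; rewrite inE negb_or => /andP[_ xl] /andP[yl ul].
by rewrite sxy /= IH //= yl ul.
Qed.

End SiblingOrder.

Section Before.
Variable A : Type.

Fixpoint before (P R : pred A) (l : seq A) : bool :=
  if l is x :: l' then (P x && has R l') || before P R l' else false.

Definition before_step (P G R : pred A) (h : bool * bool) (x : A) :=
  (h.1 || P x, [|| h.2, G x | h.1 && R x]).

Lemma foldl_before_step P G R l a b : foldl (before_step P G R) (a, b) l =
  (a || has P l, [|| b, has G l, a && has R l | before P R l]).
Proof.
elim: l a b => [|x l IH] a b /=; first by case: a; case: b.
rewrite /before_step /= IH; congr pair; first by rewrite orbA.
by case: a; case: (P x); case: (G x); case: (R x); case: b; case: (has G l);
  case: (has R l); case: (before P R l).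
Qed.

Lemma before_pred0 P l : before P pred0 l = false.
Proof. by elim: l => //= x l ->; rewrite has_pred0 andbF. Qed.

End Before.

Lemma before_map (A B : Type) (f : B -> A) P R l :
  before P R (map f l) = before (P \o f) (R \o f) l.
Proof. by elim: l => //= x l ->; rewrite has_map. Qed.

Lemma before_sorted (A : eqType) (so : rel A) (P R : pred A) l :
  transitive so -> irreflexive so -> sorted so l ->
  before P R l = has (fun u => P u && has (fun v => R v && so u v) l) l.
Proof.
move=> tr irr; elim: l => //= x l IH srt.
have allx : all (so x) l by apply: order_path_min.
rewrite IH ?(path_sorted srt) // irr andbF /=.
apply/idP/idP.
  case/orP=> [/andP[Px /hasP[v vl Rv]]|].
    by apply/orP; left; rewrite Px /=; apply/hasP; exists v => //;
      rewrite Rv (allP allx).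
  case/hasP=> u ul /andP[Pu /hasP[v vl /andP[Rv suv]]].
  apply/orP; right; apply/hasP; exists u => //; rewrite Pu /=.
  by apply/orP; right; apply/hasP; exists v => //; rewrite Rv.
case/orP=> [/andP[Px /hasP[v vl /andP[Rv _]]]|].
  by apply/orP; left; rewrite Px; apply/hasP; exists v.
case/hasP=> u ul /andP[Pu /orP[/andP[Rx sux]|/hasP[v vl /andP[Rv suv]]]].
  by have := irr x; rewrite (tr _ _ _ ((allP allx) u ul) sux).
apply/orP; right; apply/hasP; exists u => //; rewrite Pu; apply/hasP; exists v => //.
by rewrite Rv.
Qed.

Lemma before_uniq (A : eqType) (P : pred A) l : uniq l ->
  before P P l = has (fun u => P u && has (fun v => (u != v) && P v) l) l.
Proof.
elim: l => //= x l IH /andP[xl ul]; rewrite IH // eqxx /=.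
apply/idP/idP.
  case/orP=> [/andP[Px /hasP[v vl Pv]]|].
    apply/orP; left; rewrite Px /=; apply/hasP; exists v => //.
    by rewrite Pv andbT; apply: contraNneq xl => ->.
  case/hasP=> u u_l /andP[Pu /hasP[v vl /andP[uv Pv]]].
  apply/orP; right; apply/hasP; exists u => //; rewrite Pu /=.
  by apply/orP; right; apply/hasP; exists v => //; rewrite uv.
case/orP=> [/andP[Px /hasP[v vl /andP[_ Pv]]]|].
  by apply/orP; left; rewrite Px; apply/hasP; exists v.
case/hasP=> u u_l /andP[Pu /orP[/andP[_ Px]|/hasP[v vl /andP[uv Pv]]]].
  by apply/orP; left; rewrite Px; apply/hasP; exists u.
apply/orP; right; apply/hasP; exists u => //; rewrite Pu; apply/hasP; exists v => //.
by rewrite uv.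
Qed.

Definition asbool (P : Prop) : bool :=
  if excluded_middle_informative P then true else false.

Lemma asboolP P : reflect P (asbool P).
Proof. by rewrite /asbool; case: excluded_middle_informative => h; constructor. Qed.

Record dta (L : Type) := Dta {
  state : finType;
  hstate : finType;
  hinit : L -> hstate;
  hstep : L -> hstate -> state -> hstate;
  hout : L -> hstate -> state;
  final : pred state }.
Arguments state {L} _.
Arguments hstate {L} _.
Arguments hinit {L} _ _.
Arguments hstep {L} _ _ _ _.
Arguments hout {L} _ _ _.
Arguments final {L} _ _.

Definition dta_trans L (A : dta L) (l : L) (w : seq (state A)) : state A :=
  hout A l (foldl (hstep A l) (hinit A l) w).
Arguments dta_trans {L} A l w.

Definition dta_eval L (A : dta L) D so (nu : seq nat -> L) :=
  tree_fold D (dta_trans A) so nu.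
Arguments dta_eval {L} A D so nu _.

Definition dta_accepts L (A : dta L) D so nu := final A (dta_eval A D so nu [::]).
Arguments dta_accepts {L} A D so nu.

Lemma eq_dta_accepts L (A : dta L) D so nu nu' : [::] \in D ->
  {in D, nu =1 nu'} -> dta_accepts A D so nu = dta_accepts A D so nu'.
Proof. by move=> rD E; rewrite /dta_accepts /dta_eval (eq_tree_fold _ _ rD E). Qed.

Section AtomicAutomata.
Variables (Sigma : Type) (T : utree Sigma) (L : Type) (nu : seq nat -> L).
Notation D := (dom T).

Definition exists_aut (p : pred L) : dta L :=
  @Dta L bool (bool * bool)%type (fun _ => (false, false))
    (fun _ => before_step id pred0 pred0) (fun l h => p l || h.1) id.

Lemma exists_aut_accepts p o :
  dta_accepts (exists_aut p) D o nu = has (fun w => p (nu w)) D.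
Proof.
rewrite /dta_accepts /dta_eval -(@tree_fold_unique D _ _ _ o nu
  (fun s => has (fun w => prefix s w && p (nu w)) D)) ?root_in_dom //.
- by apply: eq_has => w; rewrite prefix0s.
- move=> s sD; rewrite (has_descendant (fun w => p (nu w)) o sD).
  by rewrite /dta_trans /= foldl_before_step /= has_map.
Qed.

Definition desc_aut (p r : pred L) : dta L :=
  @Dta L (bool * bool)%type (bool * bool)%type (fun _ => (false, false))
    (fun _ => before_step fst snd pred0)
    (fun l h => (r l || h.1, h.2 || (p l && h.1))) snd.

Lemma desc_aut_accepts p r o : dta_accepts (desc_aut p r) D o nu =
  has (fun u => p (nu u) && has (fun v => desc u v && r (nu v)) D) D.
Proof.
pose pw u := p (nu u) && has (fun v => desc u v && r (nu v)) D.
rewrite /dta_accepts /dta_eval -(@tree_fold_unique D _ _ _ o nu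
  (fun s => (has (fun w => prefix s w && r (nu w)) D,
             has (fun w => prefix s w && pw w) D))) ?root_in_dom //.
- by rewrite /=; apply: eq_has => w; rewrite prefix0s.
- move=> s sD; rewrite /dta_trans /= foldl_before_step /= before_pred0 !has_map /=.
  rewrite (has_descendant (fun w => r (nu w)) o sD) (has_descendant pw o sD).
  congr pair; rewrite orbC /pw orbF; congr (_ || (_ && _)).
  by rewrite -(has_strict_descendant T (fun w => r (nu w)) o s).
Qed.

Definition single_aut (m : pred L) : dta L :=
  @Dta L (bool * bool)%type (bool * bool)%type (fun _ => (false, false))
    (fun _ => before_step fst snd fst)
    (fun l h => (m l || h.1, h.2 || (m l && h.1)))
    (fun q => q.1 && ~~ q.2).

Definition marked_below (m : pred (seq nat)) s :=
  has (fun w => prefix s w && m w) D.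

Definition two_marked_below (m : pred (seq nat)) s :=
  has (fun u => prefix s u && m u &&
         has (fun v => prefix s v && (u != v) && m v) D) D.

Definition two_marked_below_children (m : pred (seq nat)) o s :=
  [|| has (two_marked_below m) (children D o s),
      has (fun c => marked_below m c &&
             has (fun d => (c != d) && marked_below m d) (children D o s))
          (children D o s)
    | m s && has (marked_below m) (children D o s)].

Lemma two_marked_below_split (m : pred (seq nat)) o s :
  two_marked_below m s -> two_marked_below_children m o s.
Proof.
case/hasP=> u uD /andP[/andP[psu mu] /hasP[v vD /andP[/andP[psv uv] mv]]].
case: (eqVneq s u) => [esu|nsu].
  rewrite -esu in uv mu *; rewrite /two_marked_below_children mu /=.
  have [c cin pcv] := strict_prefix_child o vD psv uv.
  do 2 (apply/orP; right); apply/hasP; exists c => //.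
  by apply/hasP; exists v => //; rewrite pcv.
have [cu cuin pcu] := strict_prefix_child o uD psu nsu.
case: (eqVneq s v) => [esv|nsv].
  rewrite -esv in mv uv *; rewrite /two_marked_below_children mv /=.
  do 2 (apply/orP; right); apply/hasP; exists cu => //.
  by apply/hasP; exists u => //; rewrite pcu.
have [cv cvin pcv] := strict_prefix_child o vD psv nsv.
case: (eqVneq cu cv) => [ecuv|ncuv].
  apply/orP; left; apply/hasP; exists cu => //; apply/hasP; exists u => //.
  rewrite pcu mu /=; apply/hasP; exists v => //; by rewrite ecuv pcv uv.
apply/orP; right; apply/orP; left; apply/hasP; exists cu => //.
apply/andP; split; first by apply/hasP; exists u => //; rewrite pcu.
apply/hasP; exists cv => //; rewrite ncuv /=.
by apply/hasP; exists v => //; rewrite pcv.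
Qed.

Lemma two_marked_below_join (m : pred (seq nat)) o s : s \in D ->
  two_marked_below_children m o s -> two_marked_below m s.
Proof.
move=> sD.
have child_in c : c \in children D o s -> child_of s c.
  by rewrite mem_children => /andP[].
case/or3P.
- case/hasP=> c /child_in cc.
  case/hasP=> u uD /andP[/andP[pcu mu] /hasP[v vD /andP[/andP[pcv uv] mv]]].
  apply/hasP; exists u => //; rewrite (andP (child_of_strict_prefix cc pcu)).1 mu /=.
  by apply/hasP; exists v => //; rewrite (andP (child_of_strict_prefix cc pcv)).1 uv.
- case/hasP=> c cin /andP[/hasP[u uD /andP[pcu mu]]].
  case/hasP=> d din /andP[cd /hasP[v vD /andP[pdv mv]]].
  apply/hasP; exists u => //.
  rewrite (andP (child_of_strict_prefix (child_in c cin) pcu)).1 mu /=.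
  apply/hasP; exists v => //.
  rewrite (andP (child_of_strict_prefix (child_in d din) pdv)).1 mv andbT /=.
  apply/eqP=> euv; rewrite -euv in pdv; move/eqP: cd; apply.
  exact: children_prefix_eq cin din pcu pdv.
- case/andP=> ms /hasP[c /child_in cc /hasP[w wD /andP[pcw mw]]].
  apply/hasP; exists s => //; rewrite prefix_refl ms /=.
  by apply/hasP; exists w => //; rewrite (child_of_strict_prefix cc pcw).
Qed.

Lemma single_aut_accepts m o : dta_accepts (single_aut m) D o nu =
  has (fun w => m (nu w)) D &&
  ~~ has (fun u => m (nu u) && has (fun v => (u != v) && m (nu v)) D) D.
Proof.
pose h1 := marked_below (fun w => m (nu w)).
pose h2 := two_marked_below (fun w => m (nu w)).
rewrite /dta_accepts /dta_eval
  -(@tree_fold_unique D _ _ _ o nu (fun s => (h1 s, h2 s))) ?root_in_dom //.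
- rewrite /= /h1 /h2 /marked_below /two_marked_below.
  congr (_ && ~~ _); first by apply: eq_has => w; rewrite prefix0s.
  apply: eq_has => u; rewrite prefix0s /=; congr andb.
  by apply: eq_has => v; rewrite prefix0s.
- move=> s sD; rewrite /dta_trans /= foldl_before_step /= !has_map /= before_map.
  rewrite (before_uniq _ (uniq_children D o s)) /=.
  rewrite {1}/h1 /marked_below (has_descendant (fun w => m (nu w)) o sD).
  rewrite -/(marked_below _ _) -/h1 -orbA; congr pair; apply/idP/idP.
  - exact (@two_marked_below_split (fun w => m (nu w)) o s).
  - exact (@two_marked_below_join (fun w => m (nu w)) o s sD).
Qed.

Variables (so : rel (seq nat)) (hso : sibling_order T so).

Definition sib_aut (p r : pred L) : dta L :=
  @Dta L ((bool * bool) * bool)%type (bool * bool)%type (fun _ => (false, false))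
    (fun _ => before_step (fun q => q.1.1) (fun q => q.2) (fun q => q.1.2))
    (fun l h => ((p l, r l), h.2)) (fun q => q.2).

Lemma sib_aut_accepts p r : dta_accepts (sib_aut p r) D so nu =
  has (fun u => p (nu u) && has (fun v => r (nu v) && so u v) D) D.
Proof.
pose pw u := p (nu u) && has (fun v => r (nu v) && so u v) D.
pose good s := has (fun u => prefix s u && (s != u) && pw u) D.
rewrite /dta_accepts /dta_eval -(@tree_fold_unique D _ _ _ so nu
  (fun s => ((p (nu s), r (nu s)), good s))) ?root_in_dom //.
- rewrite /= /good; apply: eq_has => u; rewrite prefix0s /= /pw.
  case: (eqVneq [::] u) => [<-|//] /=; symmetry; apply/negbTE/negP.
  case/andP=> _ /hasP[v _ /andP[_ /(sibling_order_parent hso) [t [_ _ ct _]]]].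
  by case/andP: ct => /eqP.
- move=> s sD; rewrite /dta_trans /= foldl_before_step /= !has_map /= before_map.
  rewrite (before_sorted _ _ (sibling_order_trans hso) (sibling_order_irr hso)
             (sorted_children hso s)).
  congr pair; rewrite /good (has_strict_descendant T pw so s).
  have E : {in children D so s,
             (fun c => has (fun w => prefix c w && pw w) D) =1 predU pw good}.
    move=> c; rewrite mem_children => /andP[cD _] /=; rewrite /good.
    by rewrite (has_descendant pw so cD) (has_strict_descendant T pw so c).
  rewrite (eq_in_has E) has_predU orbC; congr orb; apply: eq_in_has => c cin /=.
  rewrite /pw; congr andb; apply/hasP/hasP; last first.
    by case=> v; rewrite mem_children => /andP[vD _] ?; exists v.
  case=> v vD /andP[rv suv]; exists v; last by rewrite rv suv.
  have [t [_ _ ct cv]] := sibling_order_parent hso suv.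
  move: cin; rewrite !mem_children => /andP[_ /andP[/eqP s1 psc]]; rewrite vD /=.
  case/andP: ct => /eqP s2 pt; suff -> : s = t by [].
  by apply: (prefix_eq_size psc pt); move: s1; rewrite s2 => -[].
Qed.

End AtomicAutomata.

Lemma all2_size (X Y : Type) (r : X -> Y -> bool) s t : all2 r s t -> size s = size t.
Proof. by elim: s t => [|x s IH] [|y t] //= /andP[_ /IH ->]. Qed.

Lemma all2_rcons (X Y : Type) (r : X -> Y -> bool) s t x y : size s = size t ->
  all2 r (rcons s x) (rcons t y) = all2 r s t && r x y.
Proof.
elim: s t => [|a s IH] [|b t] //=; first by rewrite andbT.
by move=> [E]; rewrite IH // andbA.
Qed.

Lemma all2_map_l (X Y : Type) (r : X -> Y -> bool) (f : Y -> X) l :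
  all2 r (map f l) l = all (fun c => r (f c) c) l.
Proof. by elim: l => //= c l ->. Qed.

Section BooleanCombinations.
Variables (Sigma : Type) (T : utree Sigma) (L : Type) (so : rel (seq nat)).
Notation D := (dom T).

Definition compl_aut (A : dta L) : dta L :=
  @Dta L (state A) (hstate A) (hinit A) (hstep A) (hout A) (fun q => ~~ final A q).

Lemma compl_aut_accepts A nu :
  dta_accepts (compl_aut A) D so nu = ~~ dta_accepts A D so nu.
Proof. by []. Qed.

Definition prod_aut (op : bool -> bool -> bool) (A B : dta L) : dta L :=
  @Dta L (state A * state B)%type (hstate A * hstate B)%type
    (fun l => (hinit A l, hinit B l))
    (fun l h q => (hstep A l h.1 q.1, hstep B l h.2 q.2))
    (fun l h => (hout A l h.1, hout B l h.2))
    (fun q => op (final A q.1) (final B q.2)).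

Lemma foldl_pair (X Y HX HY Z : Type) (f : HX -> X -> HX) (g : HY -> Y -> HY)
    (F : Z -> X) (G : Z -> Y) l a b :
  foldl (fun h q => (f h.1 q.1, g h.2 q.2)) (a, b) (map (fun z => (F z, G z)) l) =
  (foldl f a (map F l), foldl g b (map G l)).
Proof. by elim: l a b => //= z l IH a b; rewrite IH. Qed.

Lemma prod_aut_accepts op A B nu :
  dta_accepts (prod_aut op A B) D so nu =
  op (dta_accepts A D so nu) (dta_accepts B D so nu).
Proof.
rewrite /dta_accepts /dta_eval -(@tree_fold_unique D _ _ _ so nu
  (fun s => (dta_eval A D so nu s, dta_eval B D so nu s))) ?root_in_dom //.
by move=> s sD; rewrite /dta_trans /= foldl_pair /dta_eval !tree_foldE.
Qed.

End BooleanCombinations.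

Section Projection.
Variables (Sigma : Type) (T : utree Sigma) (L : Type) (so : rel (seq nat)).
Variable flip : bool -> L -> L.
Notation D := (dom T).

(* Guessing one bit per node: the state of a node is the set of states that
   [A] can reach there over all choices of the bits below it, and the
   horizontal state remembers the bit guessed at the node itself. *)
Definition proj_aut (A : dta L) : dta L :=
  @Dta L {set state A} {set (bool * hstate A)}
    (fun l => [set (b, hinit A (flip b l)) | b : bool])
    (fun l S X => [set (x.1, hstep A (flip x.1 l) x.2 q) | x in S, q in X])
    (fun l S => [set hout A (flip x.1 l) x.2 | x in S])
    (fun S => [exists q in S, final A q]).

Variable A : dta L.

Lemma foldl_proj_aut l (X : seq nat -> {set state A}) cs b h :
  ((b, h) \in foldl (hstep (proj_aut A) l) (hinit (proj_aut A) l) (map X cs)) <->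
  exists qs, all2 (fun q c => q \in X c) qs cs /\
             h = foldl (hstep A (flip b l)) (hinit A (flip b l)) qs.
Proof.
elim/last_ind: cs b h => [|cs c IH] b h /=.
  split; first by case/imsetP=> b' _ [-> ->]; exists [::].
  by case=> qs []; case: qs => [|q qs] //= _ ->; apply/imsetP; exists b.
rewrite map_rcons foldl_rcons; split.
  case/imset2P=> [[b' h'] q] hin qin [/= eb eh]; subst b'.
  have [qs [a2 eh']] := (IH b h').1 hin.
  exists (rcons qs q); rewrite all2_rcons ?(all2_size a2) // a2 qin.
  by rewrite foldl_rcons -eh' eh.
case=> qs; case/lastP: qs => [|qs q]; first by case=> /all2_size; rewrite size_rcons.
move=> [a2 eh]; have sz : size qs = size cs.
  by move/all2_size: a2; rewrite !size_rcons => -[].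
move: a2; rewrite all2_rcons // => /andP[a2 qin].
apply/imset2P; exists (b, foldl (hstep A (flip b l)) (hinit A (flip b l)) qs) q => //.
  by apply/IH; exists qs.
by rewrite eh foldl_rcons.
Qed.

Variable nu : seq nat -> L.

Definition flipped (nu' : seq nat -> L) := forall w, exists b, nu' w = flip b (nu w).

Definition reachable_states s : {set state A} :=
  [set q | asbool (exists2 nu', flipped nu' & dta_eval A D so nu' s = q)].

Lemma reachable_children s cs qs : {subset cs <= children D so s} -> uniq cs ->
  all2 (fun q c => q \in reachable_states c) qs cs ->
  exists2 nu', flipped nu' & map (dta_eval A D so nu') cs = qs.
Proof.
elim: cs qs => [|c cs IH] [|q qs] //= sub.
  by move=> _ _; exists (fun w => flip false (nu w)) => // w; exists false.
case/andP=> ncs ucs /andP[]; rewrite inE => /asboolP [nuc agc ec] a2.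
have cin : c \in children D so s by apply: sub; rewrite inE eqxx.
have sub' : {subset cs <= children D so s}.
  by move=> x xin; apply: sub; rewrite inE xin orbT.
have [nu1 ag1 e1] := IH qs sub' ucs a2.
have cD : c \in D by move: cin; rewrite mem_children => /andP[].
(* the subtrees of distinct children are disjoint, so the guesses combine *)
exists (fun w => if prefix c w then nuc w else nu1 w).
  by move=> w; case: ifP => _; [apply: agc | apply: ag1].
congr cons; first by rewrite -ec; apply: tree_fold_local => // w _ ->.
rewrite -e1; apply/eq_in_map => c' c'in.
have c'ch : c' \in children D so s by apply: sub; rewrite inE c'in orbT.
have c'D : c' \in D by move: c'ch; rewrite mem_children => /andP[].
apply: tree_fold_local => // w wD pc'w; case: ifP => // pcw.
by move: ncs; rewrite (children_prefix_eq cin c'ch pcw pc'w) c'in.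
Qed.

Lemma proj_aut_eval s : s \in D -> dta_eval (proj_aut A) D so nu s = reachable_states s.
Proof.
move=> sD; symmetry; move: s sD; apply: tree_fold_unique => s sD.
apply/setP => q; rewrite [in LHS]inE /dta_trans /=; apply/asboolP/imsetP.
  case=> nu' ag E; have [b eb] := ag s.
  pose qs := map (dta_eval A D so nu') (children D so s).
  exists (b, foldl (hstep A (flip b (nu s))) (hinit A (flip b (nu s))) qs).
    apply/foldl_proj_aut; exists qs; split => //.
    rewrite all2_map_l; apply/allP => c _; rewrite inE; apply/asboolP.
    by exists nu'.
  by rewrite -E /dta_eval tree_foldE eb.
case=> -[b h] /foldl_proj_aut [qs [a2 eh]] ->.
have [nu1 ag1 e1] := reachable_children (fun x h => h) (uniq_children D so s) a2.
exists (fun w => if w == s then flip b (nu s) else nu1 w).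
  by move=> w; case: eqP => [->|_]; [exists b | apply: ag1].
rewrite /dta_eval tree_foldE eqxx /dta_trans /= eh -e1; congr hout; congr foldl.
apply/eq_in_map => c cin; have := cin; rewrite mem_children => /andP[cD cc].
apply: tree_fold_local => // w wD pcw; case: eqP => // ews.
by move: (child_of_not_prefix cc); rewrite -ews pcw.
Qed.

Lemma proj_aut_accepts :
  dta_accepts (proj_aut A) D so nu <-> exists2 nu', flipped nu' & dta_accepts A D so nu'.
Proof.
rewrite /dta_accepts proj_aut_eval ?root_in_dom //; split.
  case/existsP=> q /andP[]; rewrite inE => /asboolP [nu' ag E] fq.
  by exists nu'; rewrite // E.
case=> nu' ag fq; apply/existsP; exists (dta_eval A D so nu' [::]).
by rewrite fq andbT inE; apply/asboolP; exists nu'.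
Qed.

End Projection.

Definition relabel_aut (L L' : Type) (e : L' -> L) (A : dta L) : dta L' :=
  @Dta L' (state A) (hstate A) (fun l => hinit A (e l)) (fun l => hstep A (e l))
    (fun l => hout A (e l)) (final A).

Lemma relabel_aut_eval (L L' : Type) (e : L' -> L) (A : dta L) D so nu s : s \in D ->
  dta_eval (relabel_aut e A) D so nu s = dta_eval A D so (fun w => e (nu w)) s.
Proof.
move=> sD; symmetry; move: s sD; apply: tree_fold_unique => s sD.
by rewrite /dta_eval tree_foldE.
Qed.

Lemma has_pred1_and (T : eqType) (D : seq T) a (P : pred T) : a \in D ->
  has (fun w => (a == w) && P w) D = P a.
Proof.
move=> aD; apply/hasP/idP; first by case=> w _ /andP[/eqP-> ].
by move=> Pa; exists a => //; rewrite eqxx.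
Qed.

Section Compile.
Variables (Sigma : finType) (n : nat).

(* Labels extended by one bit for each first-order and each second-order
   variable [0 .. n]; larger variables are not represented. *)
Definition alabel := (Sigma * ({ffun 'I_n.+1 -> bool} * {ffun 'I_n.+1 -> bool}))%type.

Definition bit1 x (l : alabel) := l.2.1 (inord x).
Definition bit2 x (l : alabel) := l.2.2 (inord x).
Definition flip1 x b (l : alabel) : alabel :=
  (l.1, ([ffun i => if i == inord x then b else l.2.1 i], l.2.2)).
Definition flip2 x b (l : alabel) : alabel :=
  (l.1, (l.2.1, [ffun i => if i == inord x then b else l.2.2 i])).

Fixpoint mso_aut (f : mso Sigma) : dta alabel :=
  match f with
  | MLab a x => exists_aut (fun l : alabel => (l.1 == a) && bit1 x l)
  | MDesc x y => desc_aut (bit1 x) (bit1 y)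
  | MSib x y => sib_aut (bit1 x) (bit1 y)
  | MEq x y => exists_aut (fun l => bit1 x l && bit1 y l)
  | MIn x X => exists_aut (fun l => bit1 x l && bit2 X l)
  | MNot g => compl_aut (mso_aut g)
  | MOr g h => prod_aut orb (mso_aut g) (mso_aut h)
  | MEx1 x g => proj_aut (flip1 x) (prod_aut andb (mso_aut g) (single_aut (bit1 x)))
  | MEx2 X g => proj_aut (flip2 X) (mso_aut g)
  end.

Definition annotate (T : utree Sigma) (e1 : nat -> seq nat)
    (e2 : nat -> pred (seq nat)) (w : seq nat) : alabel :=
  (lab T w, ([ffun i : 'I_n.+1 => e1 i == w], [ffun i : 'I_n.+1 => e2 i w])).

Lemma bit1_annotate T e1 e2 x w : x <= n -> bit1 x (annotate T e1 e2 w) = (e1 x == w).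
Proof. by move=> le; rewrite /bit1 /annotate /= ffunE inordK. Qed.

Lemma bit2_annotate T e1 e2 x w : x <= n -> bit2 x (annotate T e1 e2 w) = e2 x w.
Proof. by move=> le; rewrite /bit2 /annotate /= ffunE inordK. Qed.

Lemma bit1_flip1 x b l : x <= n -> bit1 x (flip1 x b l) = b.
Proof. by move=> le; rewrite /bit1 /flip1 /= ffunE eqxx. Qed.

Lemma bit2_flip2 x b l : x <= n -> bit2 x (flip2 x b l) = b.
Proof. by move=> le; rewrite /bit2 /flip2 /= ffunE eqxx. Qed.

Lemma eq_inord x (i : 'I_n.+1) : x <= n -> (i == inord x) = (val i == x).
Proof. by move=> le; rewrite -val_eqE /= inordK. Qed.

Lemma annotate_upd1 T e1 e2 x u w : x <= n ->
  annotate T (upd e1 x u) e2 w = flip1 x (u == w) (annotate T e1 e2 w).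
Proof.
move=> le; rewrite /annotate /flip1 /=; congr (_, (_, _)).
by apply/ffunP => i; rewrite !ffunE eq_inord // /upd; case: (val i == x).
Qed.

Lemma annotate_upd2 T e1 e2 X P w : X <= n ->
  annotate T e1 (upd e2 X P) w = flip2 X (P w) (annotate T e1 e2 w).
Proof.
move=> le; rewrite /annotate /flip2 /=; congr (_, (_, _)).
by apply/ffunP => i; rewrite !ffunE eq_inord // /upd; case: (val i == X).
Qed.

Definition aut_correct (f : mso Sigma) (A : dta alabel) :=
  forall T so e1 e2, sibling_order T so -> (forall x, x \in fv1 f -> e1 x \in dom T) ->
  (sat T so e1 e2 f <-> dta_accepts A (dom T) so (annotate T e1 e2)).

Lemma mso_aut_Lab a x : x <= n -> aut_correct (MLab a x) (mso_aut (MLab a x)).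
Proof.
move=> xn T so e1 e2 _ hfv; rewrite [mso_aut _]/= exists_aut_accepts /=.
rewrite (eq_has (a2 := fun w => (e1 x == w) && (lab T w == a))).
  by rewrite has_pred1_and ?hfv ?inE //; split => [->|/eqP].
by move=> w; rewrite /= bit1_annotate // andbC.
Qed.

Lemma mso_aut_Desc x y : x <= n -> y <= n ->
  aut_correct (MDesc Sigma x y) (mso_aut (MDesc Sigma x y)).
Proof.
move=> xn yn T so e1 e2 _ hfv; rewrite [mso_aut _]/= desc_aut_accepts /=.
rewrite (eq_has (a2 := fun u =>
           (e1 x == u) && has (fun v => (e1 y == v) && desc u v) (dom T))).
  by rewrite has_pred1_and ?hfv ?inE ?eqxx // has_pred1_and ?hfv // !inE eqxx orbT.
move=> u; rewrite bit1_annotate //; congr andb.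
by apply: eq_has => v; rewrite bit1_annotate // andbC.
Qed.

Lemma mso_aut_Sib x y : x <= n -> y <= n ->
  aut_correct (MSib Sigma x y) (mso_aut (MSib Sigma x y)).
Proof.
move=> xn yn T so e1 e2 hso hfv; rewrite [mso_aut _]/= sib_aut_accepts //=.
rewrite (eq_has (a2 := fun u =>
           (e1 x == u) && has (fun v => (e1 y == v) && so u v) (dom T))).
  by rewrite has_pred1_and ?hfv ?inE ?eqxx // has_pred1_and ?hfv // !inE eqxx orbT.
move=> u; rewrite bit1_annotate //; congr andb.
by apply: eq_has => v; rewrite bit1_annotate.
Qed.

Lemma mso_aut_Eq x y : x <= n -> y <= n -> aut_correct (MEq Sigma x y) (mso_aut (MEq Sigma x y)).
Proof.
move=> xn yn T so e1 e2 _ hfv; rewrite [mso_aut _]/= exists_aut_accepts /=.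
rewrite (eq_has (a2 := fun w => (e1 x == w) && (e1 y == w))).
  by rewrite has_pred1_and ?hfv ?inE ?eqxx //; split => [->|/eqP].
by move=> w; rewrite !bit1_annotate.
Qed.

Lemma mso_aut_In x X : x <= n -> X <= n -> aut_correct (MIn Sigma x X) (mso_aut (MIn Sigma x X)).
Proof.
move=> xn Xn T so e1 e2 _ hfv; rewrite [mso_aut _]/= exists_aut_accepts /=.
rewrite (eq_has (a2 := fun w => (e1 x == w) && e2 X w)).
  by rewrite has_pred1_and ?hfv ?inE ?eqxx.
by move=> w; rewrite bit1_annotate // bit2_annotate.
Qed.

Lemma aut_correct_Not g A : aut_correct g A -> aut_correct (MNot g) (compl_aut A).
Proof.
move=> IH T so e1 e2 hso hfv; have H := IH T so e1 e2 hso hfv.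
rewrite compl_aut_accepts [sat _ _ _ _ _]/=.
by split => [ns|na s]; [apply/negP => /H | apply: (negP na); apply/H].
Qed.

Lemma aut_correct_Or g h A B : aut_correct g A -> aut_correct h B ->
  aut_correct (MOr g h) (prod_aut orb A B).
Proof.
move=> IHg IHh T so e1 e2 hso hfv; rewrite prod_aut_accepts [sat _ _ _ _ _]/=.
rewrite (IHg T so e1 e2 hso); last by move=> z zin; apply: hfv; rewrite mem_cat zin.
rewrite (IHh T so e1 e2 hso); last by move=> z zin; apply: hfv; rewrite mem_cat zin orbT.
by split => [[->|->]|/orP[]]; rewrite ?orbT; auto.
Qed.

Lemma aut_correct_Ex1 x g A : x <= n -> aut_correct g A ->
  aut_correct (MEx1 x g) (proj_aut (flip1 x) (prod_aut andb A (single_aut (bit1 x)))).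
Proof.
move=> xn IH T so e1 e2 hso hfv.
have hfv' u : u \in dom T -> forall z, z \in fv1 g -> upd e1 x u z \in dom T.
  move=> uD z zin; rewrite /upd; case: eqP => // /eqP zx.
  by apply: hfv; rewrite mem_filter /= zx.
rewrite [sat _ _ _ _ _]/= proj_aut_accepts; split.
  case=> u [uD su]; exists (annotate T (upd e1 x u) e2).
    by move=> w; exists (u == w); rewrite annotate_upd1.
  rewrite prod_aut_accepts single_aut_accepts; apply/and3P; split.
  - exact/(IH _ _ _ _ hso (hfv' u uD)).
  - by apply/hasP; exists u => //; rewrite bit1_annotate // /upd eqxx.
  - apply/negP => /hasP[v1 _ /andP[]]; rewrite bit1_annotate // /upd eqxx => /eqP <-.
    by case/hasP=> v2 _ /andP[/eqP]; rewrite bit1_annotate // /upd eqxx => + /eqP.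
case=> nu' ag; rewrite prod_aut_accepts single_aut_accepts.
case/andP=> accA /andP[/hasP[u uD bu] not_two].
have bit1E w : w \in dom T -> bit1 x (nu' w) = (u == w).
  move=> wD; apply/idP/eqP => [bw|<-//]; apply/eqP; apply: contraNT not_two => uw.
  by apply/hasP; exists u => //; rewrite bu /=; apply/hasP; exists w => //; rewrite uw.
exists u; split => //; apply/(IH _ _ _ _ hso (hfv' u uD)).
rewrite (eq_dta_accepts _ _ (root_in_dom T) (nu' := nu')) // => w wD.
by have [b eb] := ag w; rewrite annotate_upd1 // -bit1E // eb bit1_flip1.
Qed.

Lemma aut_correct_Ex2 X g A : X <= n -> aut_correct g A ->
  aut_correct (MEx2 X g) (proj_aut (flip2 X) A).
Proof.
move=> Xn IH T so e1 e2 hso hfv; rewrite [sat _ _ _ _ _]/= proj_aut_accepts; split.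
  case=> P [PD sP]; exists (annotate T e1 (upd e2 X P)).
    by move=> w; exists (P w); rewrite annotate_upd2.
  exact/(IH _ _ _ _ hso hfv).
case=> nu' ag accA; pose P w := (w \in dom T) && bit2 X (nu' w).
exists P; split; first by move=> u /andP[].
apply/(IH _ _ _ _ hso hfv).
rewrite (eq_dta_accepts _ _ (root_in_dom T) (nu' := nu')) // => w wD.
by have [b eb] := ag w; rewrite annotate_upd2 // /P wD /= eb bit2_flip2.
Qed.

Fixpoint max_var (f : mso Sigma) : nat :=
  match f with
  | MLab _ x => x
  | MDesc x y | MSib x y | MEq x y | MIn x y => maxn x y
  | MNot g => max_var g
  | MOr g h => maxn (max_var g) (max_var h)
  | MEx1 x g | MEx2 x g => maxn x (max_var g)
  end.

Lemma mso_aut_correct f : max_var f <= n -> aut_correct f (mso_aut f).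
Proof.
elim: f => [a x|x y|x y|x y|x X|g IH|g IHg h IHh|x g IH|X g IH] /= mv.
- exact: mso_aut_Lab.
- by apply: mso_aut_Desc; lia.
- by apply: mso_aut_Sib; lia.
- by apply: mso_aut_Eq; lia.
- by apply: mso_aut_In; lia.
- exact/aut_correct_Not/IH.
- by apply: aut_correct_Or; [apply: IHg | apply: IHh]; lia.
- by apply: aut_correct_Ex1; [|apply: IH]; lia.
- by apply: aut_correct_Ex2; [|apply: IH]; lia.
Qed.

End Compile.

Lemma eq_sat_env1 (Sigma : eqType) (T : utree Sigma) so (f : mso Sigma) e1 e1' e2 :
  (forall x, x \in fv1 f -> e1 x = e1' x) ->
  (sat T so e1 e2 f <-> sat T so e1' e2 f).
Proof.
elim: f e1 e1' e2 => [a x|x y|x y|x y|x X|g IH|g IHg h IHh|x g IH|X g IH] e1 e1' e2 H /=.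
- by rewrite H // inE.
- by rewrite !H // !inE eqxx ?orbT.
- by rewrite !H // !inE eqxx ?orbT.
- by rewrite !H // !inE eqxx ?orbT.
- by rewrite H // inE.
- by rewrite (IH e1 e1' e2 H).
- rewrite (IHg e1 e1' e2); last by move=> z zin; apply: H; rewrite mem_cat zin.
  by rewrite (IHh e1 e1' e2) //; move=> z zin; apply: H; rewrite mem_cat zin orbT.
- have H' u z : z \in fv1 g -> upd e1 x u z = upd e1' x u z.
    by rewrite /upd; case: eqP => // /eqP zx zin; apply: H; rewrite mem_filter /= zx.
  by split=> -[u [uD su]]; exists u; split => //; apply/(IH _ _ _ (H' u)).
- by split=> -[P [PD sP]]; exists P; split => //; apply/(IH _ _ _ H).
Qed.

Definition plain_label (Sigma : finType) n (a : Sigma) : alabel Sigma n :=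
  (a, ([ffun _ => false], [ffun _ => false])).

Definition sentence_aut (Sigma : finType) (phi : mso Sigma) : dta Sigma :=
  relabel_aut (@plain_label Sigma (max_var phi)) (mso_aut (max_var phi) phi).

Lemma sentence_aut_accepts (Sigma : finType) (phi : mso Sigma) T so :
  sentence phi -> sibling_order T so ->
  models T so phi <-> dta_accepts (sentence_aut phi) (dom T) so (lab T).
Proof.
move=> sen hso; have fv0 : fv1 phi = [::] by case/andP: sen => /nilP.
(* [[:: 0]] lies outside every tree domain, so all variable bits are off *)
rewrite /models (eq_sat_env1 _ _ _ (e1' := fun _ => [:: 0])); last by rewrite fv0.
rewrite (@mso_aut_correct _ _ phi (leqnn _) T so _ (fun _ _ => false) hso);
  last by rewrite fv0.
rewrite /dta_accepts relabel_aut_eval ?root_in_dom // -/(dta_accepts _ _ _ _).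
rewrite (eq_dta_accepts _ _ (root_in_dom T) (nu' := fun w => plain_label _ (lab T w))) //.
move=> w wD; rewrite /annotate /plain_label; congr (_, (_, _)).
apply/ffunP => i; rewrite !ffunE.
by apply/negbTE; apply: contraNneq (zero_notin_dom T) => ->.
Qed.

Lemma pairwise_index (T : eqType) (l : seq T) :
  uniq l -> pairwise (fun x y => index x l <= index y l) l.
Proof.
case: l => // x0 l' ul; apply/(pairwiseP x0) => i j; rewrite !inE => ilt jlt ij.
by rewrite !index_uniq // ltnW.
Qed.

Section CountSort.
Variable Q : finType.

Definition count_sort (w : seq Q) : seq Q :=
  flatten [seq nseq (count_mem q w) q | q <- enum Q].

Definition enum_le (x y : Q) := index x (enum Q) <= index y (enum Q).

Lemma count_sort_perm w w' : perm_eq w w' -> count_sort w = count_sort w'.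
Proof. by move/permP=> E; rewrite /count_sort; congr flatten; apply: eq_map => q; rewrite E. Qed.

Lemma sumn_pred1_mul (f : Q -> nat) x l : uniq l ->
  sumn [seq (pred1 x q) * f q | q <- l] = if x \in l then f x else 0.
Proof.
elim: l => //= y l IH /andP[yl ul]; rewrite IH // inE.
case: (eqVneq y x) => [<-|yx] /=; last by rewrite mul0n.
by rewrite (negbTE yl) mul1n addn0.
Qed.

Lemma perm_count_sort w : perm_eq (count_sort w) w.
Proof.
rewrite /perm_eq; apply/allP => x _; apply/eqP.
rewrite /count_sort count_flatten -map_comp.
rewrite (eq_map (g := fun q => (pred1 x q) * count_mem q w)); last first.
  by move=> q /=; rewrite count_nseq.
by rewrite sumn_pred1_mul ?enum_uniq // mem_enum.
Qed.

Lemma enum_le_trans : transitive enum_le.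
Proof. by move=> y x z; apply: leq_trans. Qed.

Lemma enum_le_anti : antisymmetric enum_le.
Proof.
move=> x y le; apply: (@index_inj _ x (enum Q)); rewrite ?mem_enum //.
by apply/eqP; rewrite eqn_leq.
Qed.

Lemma sorted_count_sort w : sorted enum_le (count_sort w).
Proof.
rewrite sorted_pairwise; last exact: enum_le_trans.
have : pairwise enum_le (enum Q) by apply: pairwise_index; exact: enum_uniq.
rewrite /count_sort; elim: (enum Q) => //= y l IH /andP[ay pl].
rewrite pairwise_cat IH // andbT; apply/andP; split.
  apply/allrelP => a b; rewrite mem_nseq => /andP[_ /eqP->].
  move/flattenP=> [bs /mapP[q ql ->]]; rewrite mem_nseq => /andP[_ /eqP->].
  exact: (allP ay).
apply/(pairwiseP y) => i j; rewrite !inE size_nseq => ilt jlt _.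
by rewrite !nth_nseq ilt jlt /enum_le.
Qed.

Lemma count_sort_id w : sorted enum_le w -> count_sort w = w.
Proof.
move=> sw; apply: (sorted_eq enum_le_trans enum_le_anti (sorted_count_sort w) sw).
exact: perm_count_sort.
Qed.

Lemma foldl_count_sort (H : Type) (f : H -> Q -> H) h w :
  foldl f h (count_sort w) =
  foldl (fun h q => iter (count_mem q w) (fun h => f h q) h) h (enum Q).
Proof.
rewrite /count_sort; elim: (enum Q) h => //= q l IH h.
rewrite foldl_cat IH; congr foldl.
by elim: (count_mem q w) h => //= k IHk h; rewrite IHk -iterSr.
Qed.

End CountSort.

Section SortAutomaton.
Variables (Sigma : finType) (A : dta Sigma).
Notation Q := (state A).

Definition sorted_trans (a : Sigma) (w : seq Q) : Q := dta_trans A a (count_sort w).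

Lemma sorted_trans_perm a w w' : perm_eq w w' -> sorted_trans a w = sorted_trans a w'.
Proof. by move=> p; rewrite /sorted_trans (count_sort_perm p). Qed.

(* The DFA stores, for each state [q], the map on horizontal states induced
   by the occurrences of [q] read so far. *)
Definition count_dfa_init : {ffun Q -> {ffun hstate A -> hstate A}} :=
  [ffun _ => [ffun h => h]].

Definition count_dfa_step a (st : {ffun Q -> {ffun hstate A -> hstate A}}) (x : Q) :
    {ffun Q -> {ffun hstate A -> hstate A}} :=
  [ffun q => if q == x then [ffun h => hstep A a (st q h) x] else st q].

Lemma count_dfa_iter a w q h :
  foldl (count_dfa_step a) count_dfa_init w q h =
  iter (count_mem q w) (fun h => hstep A a h q) h.
Proof.
elim/last_ind: w q h => [|w x IH] q h; first by rewrite /= !ffunE.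
rewrite foldl_rcons {1}/count_dfa_step ffunE -cats1 count_cat /= addn0.
by case: (eqVneq q x) => [->|nx]; rewrite ?ffunE IH /= ?addn1 ?addn0.
Qed.

Lemma sorted_trans_regular q a : regular (fun w : seq Q => sorted_trans a w == q).
Proof.
exists ({ffun Q -> {ffun hstate A -> hstate A}} : finType), count_dfa_init,
  (fun st : {ffun Q -> {ffun hstate A -> hstate A}} =>
     hout A a (foldl (fun h q' => st q' h) (hinit A a) (enum Q)) == q),
  (count_dfa_step a) => w.
rewrite /sorted_trans /dta_trans foldl_count_sort; congr (hout _ _ _ == _).
by elim: (enum Q) (hinit A a) => //= q' l IH h; rewrite IH count_dfa_iter.
Qed.

Definition sort_aut : tree_automaton Sigma :=
  @TreeAutomaton Sigma Q (final A) (fun q a w => sorted_trans a w == q)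
    sorted_trans_regular.

Lemma sort_aut_det : ta_deterministic sort_aut.
Proof.
move=> a q q' w qq'; apply/negP => /andP[/eqP e1 /eqP e2].
by move/eqP: qq'; apply; rewrite -e1 -e2.
Qed.

Lemma sort_aut_invariant : ta_invariant sort_aut.
Proof. by move=> q a w w' p /=; rewrite (sorted_trans_perm a p). Qed.

Section Run.
Variable T : utree Sigma.
Notation D := (dom T).

Definition sort_eval := tree_fold D sorted_trans (fun _ _ => false) (lab T).

Lemma sort_eval_run so : is_run sort_aut T so sort_eval.
Proof.
move=> s cs sD ucs mcs _ /=; rewrite [sort_eval s]tree_foldE.
apply/eqP/sorted_trans_perm/perm_map/uniq_perm => //; first exact: uniq_children.
by move=> w; rewrite mcs mem_children.
Qed.

Lemma run_sort_eval so rho : sibling_order T so -> is_run sort_aut T so rho ->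
  {in D, rho =1 sort_eval}.
Proof.
move=> hso hr; apply: tree_fold_unique => s sD.
have := hr s (children D so s) sD (uniq_children D so s) (mem_children D so s)
  (sorted_children hso s) => /= /eqP <-.
exact/sorted_trans_perm/perm_map/perm_children.
Qed.

Lemma accepts_sort_aut so : sibling_order T so ->
  accepts sort_aut T so <-> final A (sort_eval [::]).
Proof.
move=> hso; split; last by move=> f; exists sort_eval; split => //; apply: sort_eval_run.
by case=> rho [hr fr]; rewrite -(run_sort_eval hso hr (root_in_dom T)).
Qed.

Definition state_index u := index (sort_eval u) (enum Q).

Definition parent (u : seq nat) := take (size u).-1 u.

(* Children ordered by the index of their state, ties broken by position:
   along this order the states of the children come count-sorted. *)
Definition state_order (u v : seq nat) :=
  [&& u \in D, v \in D, u != [::], v != [::], parent u == parent v &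
      (state_index u < state_index v) ||
      ((state_index u == state_index v) && (last 0 u < last 0 v))].

Lemma parent_child s u : child_of s u -> parent u = s.
Proof.
by move/child_of_rcons => ->; rewrite /parent size_rcons /= -cats1 take_size_cat.
Qed.

Lemma child_parent u : u != [::] -> child_of (parent u) u.
Proof.
move=> un; rewrite /child_of /parent size_take prefix_take andbT.
by case: u un => //= x u _; rewrite ltnSn.
Qed.

Lemma state_order_sibling : sibling_order T state_order.
Proof.
split.
- move=> u v /and5P[uD vD un vn /andP[/eqP pe lt]]; split => //.
    by apply/eqP => e; move: lt; rewrite e ltnn eqxx ltnn.
  by exists (parent u); rewrite child_parent //= pe child_parent.
- move=> v u w /and5P[uD vD un vn /andP[/eqP p1 l1]].
  case/and5P=> _ wD _ wn /andP[/eqP p2 l2].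
  by rewrite /state_order uD wD un wn p1 p2 eqxx /=; lia.
- move=> s u v uD vD cu cv uv.
  have un : u != [::] by apply/eqP => e; move: cu; rewrite e /child_of.
  have vn : v != [::] by apply/eqP => e; move: cv; rewrite e /child_of.
  rewrite /state_order uD vD un vn (parent_child cu) (parent_child cv) eqxx /=.
  have : last 0 u != last 0 v.
    by apply: contraNneq uv => el; rewrite (child_of_rcons cu) (child_of_rcons cv) el.
  lia.
Qed.

Lemma sort_eval_state_order s : s \in D -> sort_eval s = dta_eval A D state_order (lab T) s.
Proof.
move: s; apply: tree_fold_unique => s sD.
rewrite [sort_eval s]tree_foldE.
rewrite (sorted_trans_perm _ (perm_map _ (perm_children D _ state_order s))).
rewrite /sorted_trans count_sort_id // sorted_map.
apply: sub_sorted (sorted_children state_order_sibling s).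
move=> u v /and5P[_ _ _ _ /andP[_ l]].
by change (enum_le (sort_eval u) (sort_eval v)); move: l; rewrite /enum_le /state_index; lia.
Qed.

Lemma accepts_sort_aut_state_order so : sibling_order T so ->
  accepts sort_aut T so <-> dta_accepts A D state_order (lab T).
Proof.
by move=> hso; rewrite accepts_sort_aut // sort_eval_state_order ?root_in_dom.
Qed.

End Run.
End SortAutomaton.

Unset Implicit Arguments.

Theorem lemma4p4 (Sigma : finType) (S : utree Sigma -> Prop) (phi : mso Sigma) :
  sentence phi -> so_invariant phi ->
  (forall T : utree Sigma,
     S T <-> exists so : rel (seq nat), sibling_order T so /\ models T so phi) ->
  exists N : tree_automaton Sigma,
    [/\ ta_deterministic N, ta_invariant N,
        (forall T : utree Sigma,
           S T <-> exists so : rel (seq nat), sibling_order T so /\ accepts N T so)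
      & (forall T : utree Sigma,
           S T <-> forall so : rel (seq nat), sibling_order T so -> accepts N T so)].
Proof.
move=> sen inv hS; set A := sentence_aut phi.
have key T so : sibling_order T so -> S T <-> accepts (sort_aut A) T so.
  move=> hso; have hst := state_order_sibling A T.
  rewrite accepts_sort_aut_state_order // -sentence_aut_accepts // hS.
  split=> [[so' [hso' m]]|m]; last by exists (state_order A T).
  exact/(inv T so' _ hso' hst).
exists (sort_aut A); split.
- exact: sort_aut_det.
- exact: sort_aut_invariant.
- move=> T; split=> [ST|[so [hso /(key T so hso)]]] //.
  have hst := state_order_sibling A T.
  by exists (state_order A T); split; last apply/(key T _ hst).
- move=> T; split=> [ST so hso|H]; first exact/(key T so hso).
  by apply/(key T _ (state_order_sibling A T))/H/state_order_sibling.
Qed.
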